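(* Let $k\in[n-1]$ and $w\in S_n^{k\searrow}$. Let $C_1$ be an increasing $k$-chain from $u$ to $v$ and $C_2$ an increasing $1$-chain from $v$ to $w$. Apply Lenart's growth diagram to $(k,1,C_1,C_2)$, obtaining a saturated $1$-chain $C_2'$ from $u$ to some $v'$ and a saturated $k$-chain $C_1'$ from $v'$ to $w$. Then $C_2'$ is an increasing $1$-chain and $C_1'$ is an increasing $k$-chain.
   Context: Permutations in one-line notation; $wt_{i,j}$ is $w$ with positions $i<j$ swapped; $\ell$ the number of inversions. $u\lessdot w$ iff $w=ut_{i,j}$, $i<j$, $\ell(w)=\ell(u)+1$; $u\lessdot_k w$ iff moreover $i\le k<j$. A saturated $k$-chain is $v_1\lessdot_k\cdots\lessdot_k v_d$ ($d\ge1$), of length $d-1$; it is increasing if the smaller of the two values exchanged at each step strictly increases along the chain. $S_n^{k\searrow}=\{v:v(k+1)>\dots>v(n)\}$. Lenart's growth diagram: given $k_1,k_2\in[n-1]$, a saturated $k_1$-chain $C_1$ from $u$ to $v$ and a saturated $k_2$-chain $C_2$ from $v$ to $w$, write the concatenated chain with each step labelled $k_1$ or $k_2$. A local move applies to a segment $a\xrightarrow{k_1}b\xrightarrow{k_2}c$ (with $a\lessdot_{k_1}b\lessdot_{k_2}c$): there is a unique $b'\ne b$ with $a\lessdot b'\lessdot c$; if $a\lessdot_{k_2}b'\lessdot_{k_1}c$, replace the segment by $a\xrightarrow{k_2}b'\xrightarrow{k_1}c$; otherwise (then $a\lessdot_{k_2}b\lessdot_{k_1}c$) replace it by $a\xrightarrow{k_2}b\xrightarrow{k_1}c$.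 Apply local moves until all $k_2$-labelled steps precede all $k_1$-labelled steps; the output is the resulting saturated $k_2$-chain from $u$ to some $v'$ (same length as $C_2$) and saturated $k_1$-chain from $v'$ to $w$ (same length as $C_1$). The output does not depend on the order of moves. *)

(* Permutations of [n] are modelled as 'S_n = {perm 'I_n};
   positions and values are 0-based ordinals (paper: 1-based). *)
From mathcomp Require Import all_boot all_fingroup.
From Stdlib Require Import Relations.
Set Implicit Arguments. Unset Strict Implicit. Unset Printing Implicit Defensive.

Section Defs.
Variable n : nat.

(* w t_{i,j}: w with positions i and j swapped, i.e. (w t_{ij})(p) = w (t_{ij} p).
   In mathcomp (s * t) x = t (s x), hence tperm i j * w. *)
Definition swp (w : 'S_n) (i j : 'I_n) : 'S_n := (tperm i j * w)%g.

Definition ell (w : 'S_n) : nat :=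
  #|[set p : 'I_n * 'I_n | (p.1 < p.2) && (w p.2 < w p.1)]|.

Definition covers (u w : 'S_n) : Prop :=
  exists i j : 'I_n, i < j /\ w = swp u i j /\ ell w = (ell u).+1.

(* u <._k w : additionally i <= k < j in 1-based positions, i.e.
   i' < k <= j' for the 0-based positions i' = i-1, j' = j-1. *)
Definition kcovers (k : nat) (u w : 'S_n) : Prop :=
  exists i j : 'I_n, [/\ i < j, i < k <= j, w = swp u i j & ell w = (ell u).+1].

(* saturated k-chain x = v_1 <._k v_2 <._k ... (the chain is x :: s) *)
Fixpoint sat_kchain (k : nat) (x : 'S_n) (s : seq 'S_n) : Prop :=
  match s with
  | [::] => True
  | y :: s' => kcovers k x y /\ sat_kchain k y s'
  end.

(* the smaller of the two values exchanged in the step a -> b *)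
Definition smallval (a b : 'S_n) : nat :=
  \big[minn/n]_(p : 'I_n | a p != b p) (a p : nat).

Fixpoint step_vals (x : 'S_n) (s : seq 'S_n) : seq nat :=
  match s with
  | [::] => [::]
  | y :: s' => smallval x y :: step_vals y s'
  end.

Definition incr_kchain (k : nat) (x : 'S_n) (s : seq 'S_n) : Prop :=
  sat_kchain k x s /\ sorted ltn (step_vals x s).

(* w in S_n^{k\searrow}: w(k+1) > ... > w(n) (1-based), i.e. positions k..n-1 0-based *)
Definition dec_tail (k : nat) (w : 'S_n) : Prop :=
  forall p q : 'I_n, k <= p -> p < q -> w q < w p.

(* Labelled chains for Lenart's growth diagram: start x0 (fixed) followed by
   steps (lab, y); lab = false means label k1 (first chain), lab = true
   means label k2 (second chain). *)
Definition lchain := seq (bool * 'S_n).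

Inductive gd_move (k1 k2 : nat) (x0 : 'S_n) : lchain -> lchain -> Prop :=
| GDmove (pre post : lchain) (b c b'' : 'S_n) :
    kcovers k1 (last x0 (map snd pre)) b ->
    kcovers k2 b c ->
    ( (b'' != b /\ covers (last x0 (map snd pre)) b'' /\ covers b'' c /\
       kcovers k2 (last x0 (map snd pre)) b'' /\ kcovers k1 b'' c)
      \/
      (b'' = b /\
       forall b' : 'S_n, b' != b -> covers (last x0 (map snd pre)) b' -> covers b' c ->
         ~ (kcovers k2 (last x0 (map snd pre)) b' /\ kcovers k1 b' c)) ) ->
    gd_move k1 k2 x0 (pre ++ (false, b) :: (true, c) :: post)
                     (pre ++ (true, b'') :: (false, c) :: post).

Definition concat_lchain (s1 s2 : seq 'S_n) : lchain :=
  [seq (false, x) | x <- s1] ++ [seq (true, x) | x <- s2].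

End Defs.

(* Label the steps of the concatenated chain by k and 1 and follow the values
   exchanged by the k-labelled steps.  A saturated 1-chain is always
   increasing (each step puts a larger value in position 1), and a saturated
   k-chain whose step values weakly increase is increasing (consecutive steps
   cannot move the same value), so it suffices that every local move keeps
   the k-step values weakly increasing.  A move replaces a -k-> b -1-> c by
   a -1-> b' -k-> c; the k-step value of a 1-then-k chain from a to c depends
   only on a and c, so it can be computed from an explicit choice of b'.
   Either it is unchanged; or it rises from x to x', and then no later k-step
   can use a value in [x, x'); or it drops to x', and then an earlier k-step
   value above x' would leave an inversion among the positions after k that
   survives until w, contradicting w in S_n^{k\searrow}. *)

From mathcomp Require Import all_boot all_fingroup zify.
From Stdlib Require Import Relations.
Set Implicit Arguments. Unset Strict Implicit. Unset Printing Implicit Defensive.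

Ltac ord_lia := repeat match goal with
  | H : @eq _ _ _ |- _ => move/(congr1 (@nat_of_ord _)): H => H
  | H : not (@eq _ _ _) |- _ => move/(contra_not (@ord_inj _ _ _)): H => H
  | |- @eq _ _ _ => apply: ord_inj
  | |- not _ => move=> ?
  end; simpl nat_of_ord in *; lia.

(* Case split on an innermost [tperm x y z], substituting when [z] is [x] or [y]. *)
Ltac tperm_case := match goal with |- context [fun_of_perm (tperm ?x ?y) ?z] =>
  lazymatch z with context [fun_of_perm (tperm _ _) _] => fail | _ =>
  let H := fresh "H" in let H' := fresh "H" in
  case: (tpermP x y z) => [H|H|H H']; try subst end end.

Ltac tperm_lia :=
  repeat (first [progress rewrite ?tpermL ?tpermR | tperm_case]); intros; try ord_lia.

Section Transpositions.
Variable n : nat.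
Implicit Types (a b c : 'S_n) (i j m p q : 'I_n).

Lemma swpE a i j m : swp a i j m = a (tperm i j m).
Proof. by rewrite /swp permM. Qed.

Lemma swpK a i j : swp (swp a i j) i j = a.
Proof. by rewrite /swp mulgA tperm2 mul1g. Qed.

Lemma val_perm_eq a m1 m2 : (a m1 == a m2 :> nat) = (m1 == m2).
Proof. by rewrite (inj_eq val_inj) (inj_eq perm_inj). Qed.

Lemma ell_swp_lt a i j : i < j -> a i < a j -> ell a < ell (swp a i j).
Proof.
move=> lij aij; rewrite /ell.
set A := [set p | _]; set B := [set p | _].
pose t := tperm i j.
have tK x : t (t x) = x by rewrite tpermK.
(* Sort the pair of positions transported by [t]; this injects the inversions
   of [a] into those of [swp a i j] other than [(i, j)]. *)
pose f (p : 'I_n * 'I_n) := if t p.1 < t p.2 then (t p.1, t p.2) else p.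
have f_inj : {in A &, injective f}.
  move=> [r1 s1] [r2 s2]; rewrite !inE /= /f /= => /andP[l1 _] /andP[l2 _].
  case: ifP => c1; case: ifP => c2 [e1 e2].
  - by rewrite -(tK r1) e1 tK -(tK s1) e2 tK.
  - by move: c2; rewrite -e1 -e2 !tK l1.
  - by move: c1; rewrite e1 e2 !tK l2.
  - by rewrite e1 e2.
have fAB : [set f x | x in A] \subset B :\ (i, j).
  apply/subsetP => q /imsetP [[r s]]; rewrite !inE /= => /andP [lrs ars] ->.
  rewrite /f /=; case: ifP => c.
  - rewrite /= !swpE !tK ars c !andbT; apply/eqP => -[e1 e2].
    by move: lrs; rewrite -(tK r) -(tK s) e1 e2 /t tpermL tpermR; lia.
  - have ne : (r, s) != (i, j).
      by apply/eqP => -[er es]; subst r s; move: ars; rewrite ltnNge ltnW.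
    rewrite lrs ne /= !swpE; move: c; rewrite /t; tperm_lia.
have ijB : (i, j) \in B by rewrite inE /= lij !swpE tpermL tpermR aij.
rewrite -(card_in_imset f_inj) (cardsD1 (i, j) B) ijB add1n ltnS.
exact: subset_leq_card.
Qed.

Lemma cover_swp_lt a i j : i < j -> ell (swp a i j) = (ell a).+1 -> a i < a j.
Proof.
move=> lij e; case: (ltngtP (a i) (a j)) => // h.
- have := ell_swp_lt (a := swp a i j) lij; rewrite !swpE tpermL tpermR swpK => /(_ h).
  by rewrite e ltnNge leqnSn.
- by move/perm_inj: (val_inj h) => eij; move: lij; rewrite eij ltnn.
Qed.

Lemma cover_swp_no_middle a i j m :
  i < m < j -> ell (swp a i j) = (ell a).+1 -> a i < a m < a j -> False.
Proof.
move=> /andP [lim lmj] e /andP [h1 h2].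
have e1 := ell_swp_lt lim h1.
have e2 : ell (swp a i m) < ell (swp (swp a i m) m j).
  by apply: ell_swp_lt => //; rewrite !swpE tpermR; tperm_lia.
have e3 : ell (swp (swp a i m) m j) < ell (swp (swp (swp a i m) m j) i m).
  by apply: ell_swp_lt => //; rewrite !swpE tpermL; tperm_lia.
have swp3 : swp (swp (swp a i m) m j) i m = swp a i j.
  by apply/permP => x; rewrite !swpE; congr (a _); tperm_lia.
by move: e3; rewrite swp3 e; lia.
Qed.

Lemma big_minn_pred2 (l : seq 'I_n) (F : 'I_n -> nat) i j : i != j -> uniq l ->
  (forall p, F p <= n) ->
  \big[minn/n]_(p <- l | (p == i) || (p == j)) F p =
  minn (if i \in l then F i else n) (if j \in l then F j else n).
Proof.
move=> nij; elim: l => [|x l IH] /=; first by rewrite big_nil /= minnn.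
move=> /andP [xl ul] Fn; rewrite big_cons IH // !inE.
have := Fn i; have := Fn j.
have [exi | nxi] := eqVneq x i.
  by subst x; rewrite [j == i]eq_sym (negbTE nij) (negbTE xl) /=; case: (j \in l); lia.
have [exj | nxj] //= := eqVneq x j.
by subst x; rewrite (negbTE xl) /=; case: (i \in l); lia.
Qed.

Lemma smallval_swp a i j : i != j -> smallval a (swp a i j) = minn (a i) (a j).
Proof.
move=> nij; rewrite /smallval (eq_bigl (fun p => (p == i) || (p == j))).
  by rewrite big_minn_pred2 ?index_enum_uniq ?mem_index_enum // => p; apply: ltnW.
move=> p /=; rewrite swpE (inj_eq perm_inj) eq_sym.
case: (tpermP i j p) => [->|->|/eqP/negbTE-> /eqP/negbTE->]; last by rewrite eqxx.
  by rewrite eqxx /= eq_sym nij.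
by rewrite eqxx orbT nij.
Qed.

Lemma kcoversP k a b : kcovers k a b ->
  exists i j, [/\ i < k <= j, b = swp a i j, ell b = (ell a).+1, a i < a j
                & smallval a b = a i].
Proof.
move=> [i [j [lij hk eb el]]]; have aij : a i < a j by rewrite eb in el; apply: cover_swp_lt el.
exists i, j; split => //; rewrite eb smallval_swp; first lia.
by apply/eqP => e; move: lij; rewrite e ltnn.
Qed.

Lemma kcovers_covers k a b : kcovers k a b -> covers a b.
Proof. by move=> [i [j [lij _ eb el]]]; exists i, j. Qed.

Lemma kcovers_swp2 k1 k2 a i j p q :
  i < k1 <= j -> p < k2 <= q -> a i < a j -> swp a i j p < swp a i j q ->
  ell (swp (swp a i j) p q) = (ell a).+2 ->
  kcovers k1 a (swp a i j) /\ kcovers k2 (swp a i j) (swp (swp a i j) p q).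
Proof.
move=> hij hpq aij bpq el.
have e1 : ell a < ell (swp a i j) by apply: ell_swp_lt; lia.
have e2 := ell_swp_lt (_ : p < q) bpq.
by split; [exists i, j | exists p, q]; split => //; lia.
Qed.

End Transpositions.

Section SaturatedChains.
Variable n : nat.
Implicit Types (x : 'S_n) (s : seq 'S_n).

Lemma sat_1chain_incr x s : sat_kchain 1 x s -> sorted ltn (step_vals x s).
Proof.
elim: s x => [|y [|z s] IH] x //= [/kcoversP [i [j [hij -> _ aij ->]]] hyz].
apply/andP; split; last exact: IH _ hyz.
case: hyz => /kcoversP [i' [j' [hij' _ _ _ ->]]] _.
have -> : i' = i by apply: ord_inj; lia.
by rewrite swpE tpermL.
Qed.

Lemma sat_kchain_sorted_ltn k x s :
  sat_kchain k x s -> sorted leq (step_vals x s) -> sorted ltn (step_vals x s).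
Proof.
elim: s x => [|y [|z s] IH] x //= [/kcoversP [i [j [hij -> _ _ ->]]] hyz].
move=> /andP [le hs]; apply/andP; split; last exact: IH _ hyz hs.
case: hyz => /kcoversP [i' [j' [hij' _ _ _ ->]]] _ in le *.
rewrite ltn_neqAle le andbT; have <- : swp x i j j = x i by rewrite swpE tpermR.
by rewrite val_perm_eq; apply/eqP => e; rewrite -e in hij'; lia.
Qed.

End SaturatedChains.

Lemma kcovers1P n (a b : 'S_n.+1) : kcovers 1 a b ->
  exists q : 'I_n.+1, [/\ 0 < q, b = swp a ord0 q, ell b = (ell a).+1 & a ord0 < a q].
Proof.
move=> /kcoversP [i [q [hq eb el aiq _]]].
have i0 : i = ord0 by apply: ord_inj => /=; lia.
by subst i; exists q; split => //; lia.
Qed.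

Section GrowthStep.
Variables n k : nat.
Hypothesis k_gt0 : 0 < k.
Implicit Types (a b c : 'S_n.+1) (i j m p q r : 'I_n.+1).

Lemma one_k_smallval a b c : kcovers 1 a b -> kcovers k b c ->
  exists r, [/\ k <= r, c r != a r, smallval b c = c r
              & forall m, k <= m -> c m != a m -> m != r -> c m = a ord0].
Proof.
move=> /kcovers1P [q [q0 eb _ aq]] /kcoversP [p [r [hpr ec _ bpr sv]]].
have cE x : c x = a (tperm ord0 q (tperm p r x)) by rewrite ec eb !swpE.
exists r; split; first by case/andP: hpr.
- rewrite cE tpermR (inj_eq perm_inj); apply/eqP; move: bpr; rewrite eb !swpE.
  tperm_lia.
- by rewrite sv ec swpE tpermR.
- move=> x kx; rewrite cE (inj_eq perm_inj) => /eqP + /eqP; tperm_lia.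
Qed.

Lemma one_k_smallval_uniq a b1 b2 c :
  kcovers 1 a b1 -> kcovers k b1 c -> kcovers 1 a b2 -> kcovers k b2 c ->
  smallval b1 c = smallval b2 c.
Proof.
move=> h1 h1' h2 h2'.
have [r1 [k1 c1 -> e1]] := one_k_smallval h1 h1'.
have [r2 [k2 c2 -> e2]] := one_k_smallval h2 h2'.
case: (eqVneq r1 r2) => [-> // | nr].
have := e1 _ k2 c2; rewrite eq_sym nr -(e2 _ k1 c1 nr) => /(_ isT) /perm_inj er.
by rewrite er eqxx in nr.
Qed.

Definition tail_inversion z c :=
  exists p q, [/\ k <= p, p < q, c p <= z & z < c q].

Variant smallval_move_spec a c (x : nat) : nat -> Prop :=
  | SmallvalKept : smallval_move_spec a c x x
  | SmallvalRaised x' of x < x' & x' < c ord0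
      & (forall m, m < k -> x <= c m -> x' <= c m) : smallval_move_spec a c x x'
  | SmallvalLowered x' of x' < x & a ord0 <= x' & x' < c ord0
      & (forall m, k <= m -> x' < a m <= x -> tail_inversion x' c) :
      smallval_move_spec a c x x'.
Arguments SmallvalKept {a c x}.

Lemma one_k_middle_swp a c x x' p q p' q' :
  c = swp (swp a p q) p' q' -> ell c = (ell a).+2 -> smallval_move_spec a c x x' ->
  p < 1 <= q -> p' < k <= q' -> a p < a q -> swp a p q p' < swp a p q q' ->
  minn (swp a p q p') (swp a p q q') = x' ->
  exists2 b', kcovers 1 a b' /\ kcovers k b' c & smallval_move_spec a c x (smallval b' c).
Proof.
move=> -> el spec hpq hpq' apq bpq ex'; exists (swp a p q).
  by apply: kcovers_swp2.
by rewrite smallval_swp ?ex' //; apply/eqP; ord_lia.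
Qed.

Lemma smallval_raised a j j' : k <= j -> k <= j' -> ell (swp a ord0 j) = (ell a).+1 ->
  a j < a j' -> smallval_move_spec a (swp (swp a ord0 j) ord0 j') (a ord0) (a j).
Proof.
move=> kj kj' el aj'; have a0j : a ord0 < a j by apply: cover_swp_lt el; ord_lia.
apply: SmallvalRaised => //; first by rewrite !swpE tpermL; tperm_lia.
move=> m mk; rewrite !swpE; have [-> | /eqP m0] := eqVneq m ord0; first by tperm_lia.
have -> : tperm ord0 j (tperm ord0 j' m) = m by tperm_lia.
move=> am; case: leqP => // ma; exfalso.
apply: (cover_swp_no_middle (i := ord0) (m := m) _ el); first by ord_lia.
by rewrite ma andbT ltn_neqAle am val_perm_eq andbT; apply/eqP; ord_lia.
Qed.

Lemma smallval_lowered a i j : 0 < i -> i < k <= j ->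
  ell (swp (swp a i j) ord0 j) = (ell (swp a i j)).+1 -> a ord0 < a i < a j ->
  smallval_move_spec a (swp (swp a i j) ord0 j) (a i) (a ord0).
Proof.
move=> i0 hij el /andP [a0i aij]; have [ik kj] := andP hij.
apply: SmallvalLowered => //; first by rewrite !swpE; tperm_lia.
move=> m km /andP [a0m ami]; exists j, m; rewrite !swpE tpermR.
have -> : tperm i j (tperm ord0 j m) = m by tperm_lia.
split => //; last by tperm_lia.
case: ltngtP => // [mj | /ord_inj ejm]; last by subst m; lia.
have ami' : a m < a i by rewrite ltn_neqAle ami val_perm_eq andbT; apply/eqP; ord_lia.
exfalso; apply: (cover_swp_no_middle (i := ord0) (m := m) _ el); first by ord_lia.
by rewrite !swpE tpermR; tperm_lia.
Qed.

Lemma k_one_middle_swap a b c : kcovers k a b -> kcovers 1 b c ->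
  exists2 b', kcovers 1 a b' /\ kcovers k b' c
            & smallval_move_spec a c (smallval a b) (smallval b' c).
Proof.
move=> /kcoversP [i [j [hk -> el1 aij ->]]] /kcovers1P [j' [j'0 -> el2 bij']].
have elc : ell (swp (swp a i j) ord0 j') = (ell a).+2 by lia.
have [ik kj] := andP hk; move: bij'; rewrite !swpE => bij'.
have [ei | /eqP i0] := eqVneq i ord0.
  subst i; rewrite tpermL in bij'; have aj' : a j < a j' by move: bij'; tperm_lia.
  have [kj' | j'k] := leqP k j'.
  - have spec := smallval_raised kj kj' el1 aj'.
    apply: (one_k_middle_swp (p := ord0) (q := j) (p' := ord0) (q' := j') _ elc spec) => //.
    all: rewrite ?swpE; tperm_lia.
  - apply: (one_k_middle_swp (p := ord0) (q := j') (p' := j') (q' := j) _ elc SmallvalKept).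
    all: rewrite ?swpE; try tperm_lia.
    by apply/permP => m; rewrite !swpE; congr (a _); tperm_lia.
have t0 : tperm i j ord0 = ord0 by tperm_lia.
rewrite t0 in bij'.
have [ej' | /eqP ji] := eqVneq j' i.
  subst j'; rewrite tpermL in bij'.
  have [a0i | ai0] := ltnP (a ord0) (a i).
  - apply: (one_k_middle_swp (p := ord0) (q := i) (p' := ord0) (q' := j) _ elc SmallvalKept).
    all: rewrite ?swpE; try tperm_lia.
    by apply/permP => m; rewrite !swpE; congr (a _); tperm_lia.
  - have ai0' : a i < a ord0 by rewrite ltn_neqAle ai0 val_perm_eq andbT; apply/eqP; ord_lia.
    apply: (one_k_middle_swp (p := ord0) (q := j) (p' := i) (q' := j) _ elc SmallvalKept).
    all: rewrite ?swpE; try tperm_lia.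
    by apply/permP => m; rewrite !swpE; congr (a _); tperm_lia.
have [ej' | /eqP jj] := eqVneq j' j.
  subst j'; rewrite tpermR in bij'.
  have i_gt0 : 0 < i by ord_lia.
  have spec := smallval_lowered i_gt0 hk el2 (introT andP (conj bij' aij)).
  apply: (one_k_middle_swp (p := ord0) (q := i) (p' := i) (q' := j) _ elc spec).
  all: rewrite ?swpE; try tperm_lia.
  by apply/permP => m; rewrite !swpE; congr (a _); tperm_lia.
have a0j' : a ord0 < a j' by move: bij'; tperm_lia.
apply: (one_k_middle_swp (p := ord0) (q := j') (p' := i) (q' := j) _ elc SmallvalKept).
all: rewrite ?swpE; try tperm_lia.
by apply/permP => m; rewrite !swpE; congr (a _); tperm_lia.
Qed.

Lemma growth_move a b c b2 : kcovers k a b -> kcovers 1 b c ->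
  (b2 != b /\ covers a b2 /\ covers b2 c /\ kcovers 1 a b2 /\ kcovers k b2 c) \/
  (b2 = b /\ forall b', b' != b -> covers a b' -> covers b' c ->
                        ~ (kcovers 1 a b' /\ kcovers k b' c)) ->
  [/\ kcovers 1 a b2, kcovers k b2 c
    & smallval_move_spec a c (smallval a b) (smallval b2 c)].
Proof.
move=> hab hbc hmove; have [b' [k1 k2] spec] := k_one_middle_swap hab hbc.
have [k1' k2'] : kcovers 1 a b2 /\ kcovers k b2 c.
  case: hmove => [[_ [_ [_ //]]] | [-> no_other]].
  have [<- // | nb'] := eqVneq b' b.
  by case: (no_other b' nb' (kcovers_covers k1) (kcovers_covers k2)).
by rewrite (one_k_smallval_uniq k1' k2' k1 k2).
Qed.

End GrowthStep.

Lemma pairwise_leq_replace (A B : seq nat) x x' :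
  pairwise leq (A ++ x :: B) -> all (fun s => s <= x') A -> all (leq x') B ->
  pairwise leq (A ++ x' :: B).
Proof.
rewrite !pairwise_cat !pairwise_cons !allrel_consr.
by move=> /and3P [/andP [_ AB] pA /andP [_ pB]] hA hB; apply/and3P; rewrite hA AB hB.
Qed.

Section LabelledChains.
Variables (n k : nat).
Implicit Types (a b c x y : 'S_n) (ch : lchain n).

Fixpoint lchain_valid x ch : Prop :=
  if ch is (l, y) :: ch' then kcovers (if l then 1 else k) x y /\ lchain_valid y ch'
  else True.

Fixpoint kstep_vals x ch : seq nat :=
  if ch is (l, y) :: ch' then
    if l then kstep_vals y ch' else smallval x y :: kstep_vals y ch'
  else [::].

Lemma lchain_valid_cat x ch1 ch2 : lchain_valid x (ch1 ++ ch2) <->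
  lchain_valid x ch1 /\ lchain_valid (last x (map snd ch1)) ch2.
Proof. by elim: ch1 x => [|[l y] ch1 IH] x /=; [tauto | rewrite IH; tauto]. Qed.

Lemma kstep_vals_cat x ch1 ch2 :
  kstep_vals x (ch1 ++ ch2) = kstep_vals x ch1 ++ kstep_vals (last x (map snd ch1)) ch2.
Proof. by elim: ch1 x => [|[[] y] ch1 IH] x //=; rewrite IH. Qed.

Lemma lchain_valid_labelled x (l : bool) (s : seq 'S_n) :
  lchain_valid x [seq (l, y) | y <- s] <-> sat_kchain (if l then 1 else k) x s.
Proof. by elim: s x => [|y s IH] x //=; rewrite IH. Qed.

Lemma kstep_vals_labelled x (l : bool) (s : seq 'S_n) :
  kstep_vals x [seq (l, y) | y <- s] = if l then [::] else step_vals x s.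
Proof. by case: l; elim: s x => [|y s IH] x //=; rewrite IH. Qed.

Lemma map_snd_labelled (l : bool) (s : seq 'S_n) : map snd [seq (l, y) | y <- s] = s.
Proof. by rewrite -map_comp map_id. Qed.

Lemma lchain_invariant (P : 'S_n -> Prop) (Q R : pred nat) x ch :
  (forall a b, kcovers 1 a b -> P a -> P b) ->
  (forall a b, kcovers k a b -> Q (smallval a b) -> P a -> P b /\ R (smallval a b)) ->
  lchain_valid x ch -> all Q (kstep_vals x ch) -> P x ->
  P (last x (map snd ch)) /\ all R (kstep_vals x ch).
Proof.
move=> P1 Pk; elim: ch x => [|[[] y] ch IH] x //= [hxy hch].
- by move=> hQ /(P1 _ _ hxy); apply: IH.
- move=> /andP [Qxy hQ] /(Pk _ _ hxy Qxy) [Py Rxy].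
  by have [Pl ->] := IH y hch hQ Py; rewrite Rxy.
Qed.

Lemma lchain_invariant_last (P : 'S_n -> Prop) (Q : pred nat) x ch :
  (forall a b, kcovers 1 a b -> P a -> P b) ->
  (forall a b, kcovers k a b -> Q (smallval a b) -> P a -> P b) ->
  lchain_valid x ch -> all Q (kstep_vals x ch) -> P x -> P (last x (map snd ch)).
Proof.
move=> P1 Pk v hQ Px; have Pk' a b : kcovers k a b -> Q (smallval a b) -> P a -> P b /\ true.
  by move=> ab Qab /(Pk a b ab Qab).
by have [] := lchain_invariant (R := predT) P1 Pk' v hQ Px.
Qed.

Lemma mem_kstep_vals x ch s : s \in kstep_vals x ch ->
  exists ch1 y ch2, ch = ch1 ++ (false, y) :: ch2 /\ s = smallval (last x (map snd ch1)) y.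
Proof.
elim: ch x => [|[l y] ch IH] x //=.
have shift : (exists ch1 y' ch2, ch = ch1 ++ (false, y') :: ch2 /\
                s = smallval (last y (map snd ch1)) y') ->
    exists ch1 y' ch2, (l, y) :: ch = ch1 ++ (false, y') :: ch2 /\
                s = smallval (last x (map snd ch1)) y'.
  by move=> [ch1 [y' [ch2 [-> ->]]]]; exists ((l, y) :: ch1), y', ch2.
case: l shift => shift; first by move/IH.
by rewrite inE => /orP [/eqP -> | /IH]; [exists [::], y, ch | ].
Qed.

Lemma lchain_split_labels ch m :
  map fst ch = nseq m true ++ nseq (size ch - m) false ->
  ch = [seq (true, y) | y <- map snd (take m ch)] ++
       [seq (false, y) | y <- map snd (drop m ch)].
Proof.
have labelled l ch' :
    map fst ch' = nseq (size ch') l -> ch' = [seq (l, y) | y <- map snd ch'].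
  by elim: ch' => [|[l' y] ch' IH] //= [-> /IH <-].
move=> h; have msz : m <= size ch.
  by have := congr1 size h; rewrite size_map size_cat !size_nseq; lia.
rewrite -{1}(cat_take_drop m ch); congr (_ ++ _); apply: labelled.
  by rewrite map_take h take_size_cat ?size_nseq // size_takel.
by rewrite map_drop h drop_size_cat ?size_nseq // size_drop.
Qed.

Definition gd_inv u w ch :=
  [/\ lchain_valid u ch, pairwise leq (kstep_vals u ch) & last u (map snd ch) = w].

Lemma gd_inv_concat u s1 s2 : incr_kchain k u s1 -> sat_kchain 1 (last u s1) s2 ->
  gd_inv u (last (last u s1) s2) (concat_lchain s1 s2).
Proof.
move=> [sat1 inc1] sat2; split.
- by apply/lchain_valid_cat; rewrite map_snd_labelled; split; apply/lchain_valid_labelled.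
- rewrite kstep_vals_cat !kstep_vals_labelled cats0 -sorted_pairwise; last exact: leq_trans.
  by apply: sub_sorted inc1 => ? ? /ltnW.
- by rewrite map_cat last_cat !map_snd_labelled.
Qed.

Lemma gd_inv_incr_split u w ch m : gd_inv u w ch ->
  map fst ch = nseq m true ++ nseq (size ch - m) false ->
  incr_kchain 1 u (map snd (take m ch)) /\
  incr_kchain k (last u (map snd (take m ch))) (map snd (drop m ch)).
Proof.
move=> [v so _] labels; rewrite (lchain_split_labels labels) in v so.
rewrite kstep_vals_cat !kstep_vals_labelled map_snd_labelled /= in so.
move/lchain_valid_cat: v; rewrite map_snd_labelled.
move=> [/lchain_valid_labelled sat1 /lchain_valid_labelled sat2].
split; split => //; first exact: sat_1chain_incr.
by apply: (sat_kchain_sorted_ltn sat2); rewrite sorted_pairwise //; apply: leq_trans.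
Qed.

End LabelledChains.

Section GrowthInvariant.
Variables n k : nat.
Hypothesis k_gt0 : 0 < k.
Implicit Types (a b c u w : 'S_n.+1) (i j m p q : 'I_n.+1) (ch pre post : lchain n.+1).

Lemma kstep_vals_raised c post x x' :
  lchain_valid k c post -> all (leq x) (kstep_vals c post) -> x' < c ord0 ->
  (forall m, m < k -> x <= c m -> x' <= c m) -> all (leq x') (kstep_vals c post).
Proof.
move=> v hx c0 cm.
apply: (lchain_invariant (P := fun d : 'S_n.+1 =>
  x' < d ord0 /\ forall m, m < k -> x <= d m -> x' <= d m) _ _ v hx (conj c0 cm)).2.
- move=> a b /kcovers1P [q [q0 -> _ aq]] [a0 am]; split => [|m mk]; rewrite swpE.
    by rewrite tpermL; lia.
  by case: (tpermP ord0 q m) => [_|_|_ _]; [lia | lia | exact: am].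
- move=> a b /kcoversP [i [j [hij -> _ aij ->]]] /= xi [a0 am].
  have x'i := am i (proj1 (andP hij)) xi; split => //; split => [|m mk]; rewrite swpE.
    by case: (tpermP i j ord0) => [_|e|_ _]; [lia | ord_lia | lia].
  by case: (tpermP i j m) => [_|e|_ _]; [lia | ord_lia | exact: am].
Qed.

Lemma tail_inversion_last c post z :
  lchain_valid k c post -> all (ltn z) (kstep_vals c post) -> z < c ord0 ->
  tail_inversion k z c -> tail_inversion k z (last c (map snd post)).
Proof.
move=> v hz c0 [p [q [kp pq cp cq]]].
suff [_ /andP [wp wq]] : z < (last c (map snd post)) ord0 /\
    (last c (map snd post)) p <= z < (last c (map snd post)) q by exists p, q.
apply: (lchain_invariant_last (P := fun d : 'S_n.+1 => z < d ord0 /\ d p <= z < d q) _ _ v hz).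
- move=> a b /kcovers1P [q' [q0 -> _ aq]] [a0 /andP [ap aq']].
  by rewrite !swpE; split; [|apply/andP; split]; tperm_lia.
- move=> a b /kcoversP [i [j [hij -> _ aij ->]]] /= zi [a0 /andP [ap aq']].
  by rewrite !swpE; split; [|apply/andP; split]; tperm_lia.
- by rewrite cp cq.
Qed.

Lemma kstep_vals_prefix u pre s :
  lchain_valid k u pre -> pairwise leq (kstep_vals u pre) -> s \in kstep_vals u pre ->
  s <= (last u (map snd pre)) ord0 \/
  exists2 j : 'I_n.+1, k <= j & (last u (map snd pre)) j = s :> nat.
Proof.
move=> v so /mem_kstep_vals [ch1 [y [ch2 [epre es]]]]; subst pre.
move: v so; rewrite lchain_valid_cat kstep_vals_cat /= pairwise_cat pairwise_cons.
move=> [_ [hy v2]] /and3P [_ _ /andP [hs _]]; rewrite -es in hs.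
rewrite map_cat last_cat /=.
apply: (lchain_invariant_last (P := fun d : 'S_n.+1 =>
  s <= d ord0 \/ exists2 j : 'I_n.+1, k <= j & d j = s :> nat) _ _ v2 hs).
- move=> a b /kcovers1P [q [q0 -> _ aq]] [a0 | [j kj aj]]; rewrite !swpE tpermL.
    by left; lia.
  have [ejq | /eqP jq] := eqVneq j q; first by left; rewrite -ejq aj.
  by right; exists j; rewrite // swpE -aj; congr (nat_of_ord (a _)); tperm_lia.
- move=> a b /kcoversP [i [p [hip -> _ aip ->]]] /= si [a0 | [j kj aj]]; rewrite !swpE.
    by left; tperm_lia.
  by right; exists j; rewrite // swpE -aj; congr (nat_of_ord (a _)); tperm_lia.
- move: hy es => /kcoversP [i [j [hij -> _ aij ->]]] ->.
  by right; exists j; [case/andP: hij | rewrite swpE tpermR].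
Qed.

Lemma dec_tail_no_inversion w z : dec_tail k w -> ~ tail_inversion k z w.
Proof. by move=> dt [p [q [kp pq wp wq]]]; have := dt p q kp pq; lia. Qed.

Lemma gd_move_inv u w ch ch' :
  dec_tail k w -> gd_move k 1 u ch ch' -> gd_inv k u w ch -> gd_inv k u w ch'.
Proof.
move=> dt [] pre post b c b2 hab hbc hmove [].
have [k1 k2 spec] := growth_move k_gt0 hab hbc hmove.
rewrite /gd_inv lchain_valid_cat !kstep_vals_cat !map_cat !last_cat /=.
move: hab k1 spec; set a := last u (map snd pre) => hab k1 spec.
move=> [vpre [_ [_ vpost]]] so la; split => //; first by apply/lchain_valid_cat.
move: (so); rewrite pairwise_cat pairwise_cons allrel_consr.
move=> /and3P [/andP [Ax _] pA /andP [xB _]].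
case: spec => [// | x' xx' x'c cm | x' x'x a0 x'c tail]; apply: (pairwise_leq_replace so).
- by apply/allP => s /(allP Ax) /=; lia.
- exact: kstep_vals_raised vpost xB x'c cm.
- apply/allP => s sA; have /= sx := allP Ax s sA; rewrite leqNgt; apply/negP => x's.
  have [s0 | [j kj aj]] := kstep_vals_prefix vpre pA sA; first by rewrite -/a in s0; lia.
  apply: (dec_tail_no_inversion (z := x') dt); rewrite -la.
  apply: tail_inversion_last vpost _ x'c (tail j kj _); rewrite ?aj ?x's //.
  by apply/allP => t /(allP xB) /=; lia.
- by apply/allP => s /(allP xB) /=; lia.
Qed.

Lemma gd_moves_inv u w ch ch' : dec_tail k w ->
  clos_refl_trans_1n _ (gd_move k 1 u) ch ch' -> gd_inv k u w ch -> gd_inv k u w ch'.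
Proof. by move=> dt; elim=> // x y z /(gd_move_inv dt) hxy _ IH /hxy. Qed.

End GrowthInvariant.

Theorem lemma5p5 (n k : nat) (u : 'S_n) (s1 s2 : seq 'S_n)
    (s' : lchain n) (m : nat) :
  1 <= k <= n.-1 ->
  dec_tail k (last (last u s1) s2) ->
  incr_kchain k u s1 ->
  incr_kchain 1 (last u s1) s2 ->
  clos_refl_trans_1n _ (gd_move k 1 u) (concat_lchain s1 s2) s' ->
  map fst s' = nseq m true ++ nseq (size s' - m) false ->
  incr_kchain 1 u (map snd (take m s')) /\
  incr_kchain k (last u (map snd (take m s'))) (map snd (drop m s')).
Proof.
case: n u s1 s2 s' => [|n] u s1 s2 s' /andP [k_gt0 kn]; first by move: kn; rewrite leqNgt k_gt0.
move=> dt inc1 [sat2 _] moves.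
apply: gd_inv_incr_split (gd_moves_inv k_gt0 dt moves (gd_inv_concat inc1 sat2)).
Qed.
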